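(* Every graph of pathwidth at most $2$ and order $n$ has at most $4^{n/3}$ induced matchings. The bound is attained by the triangle $K_3$.
   Context: An induced matching of a graph $G=(V,E)$ is here a set $D\subseteq V$ such that every vertex of $D$ has exactly one neighbour in $D$ (a $(\{1\},\mathbb{N})$-dominating set); the empty set counts. Equivalently, a set of edges $M$ such that the subgraph induced by the endpoints of $M$ has edge set $M$. Order = number of vertices; pathwidth is the standard notion. *)

From mathcomp Require Import all_boot.
Set Implicit Arguments. Unset Strict Implicit. Unset Printing Implicit Defensive.

Definition simple_graph (T : finType) (e : rel T) : Prop :=
  symmetric e /\ irreflexive e.

Definition induced_matching (T : finType) (e : rel T) (D : {set T}) : bool :=
  [forall x in D, #|[set y in D | e x y]| == 1].

(* Number of induced matchings (the empty set counts). *)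
Definition num_induced_matchings (T : finType) (e : rel T) : nat :=
  #|[set D : {set T} | induced_matching e D]|.

Definition path_decomposition (T : finType) (e : rel T) (B : seq {set T}) : Prop :=
  (forall x : T, exists2 X, X \in B & x \in X) /\
  (forall x y : T, e x y -> exists2 X, X \in B & (x \in X) && (y \in X)) /\
  (forall (x : T) (i j k : nat), i <= j -> j <= k -> k < size B ->
      x \in nth set0 B i -> x \in nth set0 B k -> x \in nth set0 B j).

(* Width = max bag size - 1; pathwidth <= k iff a decomposition of width <= k exists. *)
Definition pathwidth_le (T : finType) (e : rel T) (k : nat) : Prop :=
  exists B : seq {set T}, path_decomposition e B /\ all (fun X : {set T} => #|X| <= k.+1) B.

Definition K3 : rel 'I_3 := fun i j => i != j.

(* Write nim(S) for the number of induced matchings of the subgraph induced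
   by a vertex set S, and rho = 4^(-1/3).  We prove nim(S) * rho^|S| <= 1 for
   every S in a 2-degenerate graph; for S the whole vertex set this is
   nim^3 <= 4^n.  Graphs of pathwidth at most two are 2-degenerate.

   The weighted bound follows by strong induction on |S| from the branching
   recurrence nim(S) <= nim(S - v) + sum_{u ~ v} nim(S - N[u] - N[v])
   (nim_branch): when nim(S) is covered by branches deleting k_1, ..., k_m > 0
   vertices with rho^k_1 + ... + rho^k_m <= 1, the bound propagates from the
   branches to S (bounded_branch).  A case analysis on a vertex of degree at
   most two (bounded_low_degree) always yields one of the branching vectors
   (1), (1,3), (2,2), (1,4,4), (2,3,4,4), (3,3,3,3).  The last one is tight:
   it is realised by the triangle K_3, which has 4 = 4^(3/3) induced
   matchings (K3_nim). *)

From mathcomp Require Import all_boot zify.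
From Stdlib Require Import Reals Lra Psatz.
(* Reals shadows the ssrnat notations for nat arithmetic; restore them. *)
Import ssrnat.
Set Implicit Arguments. Unset Strict Implicit.

Lemma card_bigcup_le (T I : finType) (P : pred I) (F : I -> {set T}) :
  #|\bigcup_(i | P i) F i| <= \sum_(i | P i) #|F i|.
Proof.
apply: (big_ind2 (fun (X : {set T}) n => #|X| <= n)) => [|X1 n1 X2 n2 h1 h2|//].
- by rewrite cards0.
- exact: leq_trans (leq_card_setU X1 X2).1 (leq_add h1 h2).
Qed.

Section InducedMatchings.
Variables (T : finType) (e : rel T).

Definition nim (S : {set T}) : nat :=
  #|[set D : {set T} | (D \subset S) && induced_matching e D]|.

Definition nbhd (S : {set T}) (x : T) : {set T} := [set y in S | e x y].
Definition closed_nbhd (x : T) : {set T} := x |: [set y | e x y].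

Lemma nbhd_setD (S X : {set T}) u : nbhd (S :\: X) u = nbhd S u :\: X.
Proof. by apply/setP => y; rewrite !inE andbA. Qed.

(* An induced matching of an induced subgraph is one of any larger one. *)
Lemma nim_mono (S1 S2 : {set T}) : S1 \subset S2 -> nim S1 <= nim S2.
Proof.
move=> sub12; apply: subset_leq_card; apply/subsetP => D; rewrite !inE.
by case/andP => sD1 ->; rewrite (subset_trans sD1 sub12).
Qed.

Lemma nim_set0 : nim set0 <= 1.
Proof.
rewrite -(cards1 (set0 : {set T})); apply: subset_leq_card; apply/subsetP => D.
by rewrite !inE subset0 => /andP[].
Qed.

Lemma im_partner (D : {set T}) x :
  induced_matching e D -> x \in D -> exists2 y, y \in D & e x y.
Proof.
move=> /forallP /(_ x) /implyP imD /imD /cards1P [y Dx].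
by have := set11 y; rewrite -Dx inE => /andP[]; exists y.
Qed.

Lemma im_partner_uniq (D : {set T}) x y z : induced_matching e D ->
  x \in D -> y \in D -> z \in D -> e x y -> e x z -> y = z.
Proof.
move=> /forallP /(_ x) /implyP imD /imD /cards1P [p Dx] yD zD exy exz.
have : y \in [set t in D | e x t] by rewrite inE yD exy.
have : z \in [set t in D | e x t] by rewrite inE zD exz.
by rewrite Dx !inE => /eqP -> /eqP ->.
Qed.

Hypothesis esym : symmetric e.

Lemma im_remove_edge (D : {set T}) u v :
  induced_matching e D -> u \in D -> v \in D -> e u v ->
  induced_matching e (D :\: [set u; v]) /\
  D :\: [set u; v] \subset ~: (closed_nbhd u :|: closed_nbhd v).
Proof.
move=> imD uD vD euv.
have only_v y : y \in D -> e u y -> y = v.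
  by move=> yD euy; apply: im_partner_uniq imD uD yD vD euy euv.
have only_u y : y \in D -> e v y -> y = u.
  by move=> yD evy; apply: im_partner_uniq imD vD yD uD evy _; rewrite esym.
have far y : y \in D :\: [set u; v] -> ~~ e u y && ~~ e v y.
  rewrite !inE negb_or => /andP[/andP[yu yv] yD].
  apply/andP; split; apply/negP.
    by move/(only_v y yD)/eqP; rewrite (negbTE yv).
  by move/(only_u y yD)/eqP; rewrite (negbTE yu).
split; last first.
  apply/subsetP => y yD'; have /andP[nuy nvy] := far y yD'.
  move: yD'; rewrite !inE negb_or => /andP[/andP[yu yv] _].
  by rewrite !negb_or yu yv nuy nvy.
apply/forallP => x; apply/implyP => xD'.
have /andP[nux nvx] := far x xD'; move: xD'; rewrite !inE => /andP[_ xD].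
suff -> : [set y in D :\: [set u; v] | e x y] = [set y in D | e x y].
  by move/forallP: imD => /(_ x); rewrite xD.
apply/setP => y; rewrite !inE; case: (y \in D); rewrite ?andbF // andbT.
case exy: (e x y); rewrite ?andbF // andbT.
by apply/norP; split; apply: contraTneq exy => ->;
   rewrite esym ?(negbTE nux) ?(negbTE nvx).
Qed.

(* The induced matchings of S matching u with v correspond injectively to
   induced matchings of S minus both closed neighbourhoods. *)
Lemma nim_edge (S : {set T}) u v : e u v ->
  #|[set D : {set T} | [&& D \subset S, induced_matching e D, u \in D & v \in D]]|
  <= nim (S :\: (closed_nbhd u :|: closed_nbhd v)).
Proof.
move=> euv; set A := [set D : {set T} | _].
rewrite -(card_in_imset (f := fun D => D :\: [set u; v])); last first.
  move=> D1 D2; rewrite !inE => /and4P[_ _ uD1 vD1] /and4P[_ _ uD2 vD2] eqD.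
  have uvD1 : [set u; v] \subset D1 by rewrite subUset !sub1set uD1 vD1.
  have uvD2 : [set u; v] \subset D2 by rewrite subUset !sub1set uD2 vD2.
  by rewrite -(setID D1 [set u; v]) -(setID D2 [set u; v]) eqD
             (setIidPr uvD1) (setIidPr uvD2).
apply: subset_leq_card; apply/subsetP => D' /imsetP[D].
rewrite /A inE => /and4P[sDS imD uD vD] ->.
have [imD' farD'] := im_remove_edge imD uD vD euv.
rewrite inE imD' andbT; apply/subsetP => y yD'.
rewrite in_setD -in_setC (subsetP farD' _ yD') /=.
by move: yD'; rewrite in_setD => /andP[_ /(subsetP sDS)].
Qed.

(* The basic branching recurrence: an induced matching either avoids v, or
   matches v with one of its neighbours u. *)
Lemma nim_branch (S : {set T}) v : v \in S ->
  nim S <= nim (S :\ v) +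
           \sum_(u in nbhd S v) nim (S :\: (closed_nbhd u :|: closed_nbhd v)).
Proof.
move=> vS; rewrite {1}/nim; set A := [set D : {set T} | _].
rewrite -(cardsID [set D : {set T} | v \notin D] A); apply: leq_add.
  apply: subset_leq_card; apply/subsetP => D.
  rewrite in_setI /A !inE => /andP[/andP[sDS ->] nvD]; rewrite andbT.
  by apply/subsetP => x xD; rewrite !inE (subsetP sDS _ xD) andbT;
     apply: contraNneq nvD => <-.
set B := fun u => [set D : {set T} |
  [&& D \subset S, induced_matching e D, u \in D & v \in D]].
have cover : A :\: [set D : {set T} | v \notin D] \subset \bigcup_(u in nbhd S v) B u.
  apply/subsetP => D; rewrite in_setD inE negbK /A inE => /andP[vD /andP[sDS imD]].
  have [u uD evu] := im_partner imD vD.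
  apply/bigcupP; exists u; first by rewrite inE (subsetP sDS _ uD) evu.
  by rewrite inE sDS imD uD vD.
apply: leq_trans (subset_leq_card cover) _; apply: leq_trans (card_bigcup_le _ _) _.
apply: leq_sum => u; rewrite inE => /andP[_ evu].
by apply: nim_edge; rewrite esym.
Qed.

(* A vertex without neighbours in S lies in no induced matching of S. *)
Lemma nim_isolated (S : {set T}) v : v \in S -> nbhd S v = set0 -> nim S <= nim (S :\ v).
Proof. by move=> vS N0; have := nim_branch vS; rewrite N0 big_set0 addn0. Qed.

Hypothesis eirr : irreflexive e.

Lemma adj_neq x y : e x y -> x != y.
Proof. by apply: contraTneq => ->; rewrite eirr. Qed.

(* Branching twice inside a triangle vuw whose vertices v and u have no
   further neighbours: either D avoids v and u, or D matches v with u, or D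
   matches w with v or with u (and then avoids the closed neighbourhood of w). *)
Lemma nim_triangle (S : {set T}) v u w : v \in S ->
  nbhd S v = [set u; w] -> nbhd S u = [set v; w] ->
  nim S <= nim (S :\: [set v; u]) + nim (S :\: (closed_nbhd u :|: closed_nbhd v))
           + nim (S :\: closed_nbhd w) + nim (S :\: closed_nbhd w).
Proof.
move=> vS Nv Nu.
have /[!inE] /andP[uS evu] : u \in nbhd S v by rewrite Nv !inE eqxx.
have /[!inE] /andP[_ evw] : w \in nbhd S v by rewrite Nv !inE eqxx orbT.
have /[!inE] /andP[_ euw] : w \in nbhd S u by rewrite Nu !inE eqxx orbT.
have uS' : u \in S :\ v by rewrite !inE uS eq_sym adj_neq.
have Nu' : nbhd (S :\ v) u = [set w] by rewrite nbhd_setD Nu setU1K // inE adj_neq.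
have branch_v := nim_branch vS.
rewrite Nv big_setU1 ?inE ?adj_neq //= big_set1 in branch_v.
have branch_u := nim_branch uS'; rewrite Nu' big_set1 in branch_u.
have mono_u : nim (S :\ v :\: (closed_nbhd w :|: closed_nbhd u))
              <= nim (S :\: closed_nbhd w).
  apply: nim_mono.
  exact: subset_trans (setDS _ (subsetUl _ _)) (setSD _ (subsetDl _ _)).
have mono_v : nim (S :\: (closed_nbhd w :|: closed_nbhd v)) <= nim (S :\: closed_nbhd w).
  exact/nim_mono/setDS/subsetUl.
rewrite -setDDl; lia.
Qed.

End InducedMatchings.

(* The branching factor: rho = 4^(-1/3), so that rho^(-n) = 4^(n/3). *)
Definition rho : R := Rpower (/ 4) (/ 3).

Lemma rho_pos : (0 < rho)%R.
Proof. exact: exp_pos. Qed.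

Lemma rho_cube : (rho ^ 3 = / 4)%R.
Proof.
rewrite -Rpower_pow; last exact: rho_pos.
rewrite /rho Rpower_mult; replace (/ 3 * INR 3)%R with 1%R by (simpl; field).
by apply: Rpower_1; lra.
Qed.

Lemma rho_le1 : (rho <= 1)%R.
Proof. have := rho_pos; have := rho_cube; simpl; nra. Qed.

Lemma rho_pow_ge0 n : (0 <= rho ^ n)%R.
Proof. by apply: pow_le; have := rho_pos; lra. Qed.

Lemma rho_pow_anti m n : m <= n -> (rho ^ n <= rho ^ m)%R.
Proof.
move=> mn; rewrite -(subnKC mn) pow_add.
have small : (rho ^ (n - m) <= 1)%R.
  by rewrite -(pow1 (n - m)); apply: pow_incr; have := rho_pos; have := rho_le1; lra.
have := rho_pow_ge0 m; nra.
Qed.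

Lemma rho_budgets :
  (rho + rho ^ 3 <= 1 /\ rho ^ 2 + rho ^ 2 <= 1 /\ rho + rho ^ 4 + rho ^ 4 <= 1 /\
   rho ^ 2 + rho ^ 3 + rho ^ 4 + rho ^ 4 <= 1 /\
   rho ^ 3 + rho ^ 3 + rho ^ 3 + rho ^ 3 <= 1)%R.
Proof.
have r0 := rho_pos; have r3 := rho_cube; simpl in r3.
have small : (rho <= 16 / 25)%R by nra.
simpl; repeat split; nra.
Qed.

Lemma INR_expn m n : INR (m ^ n) = (INR m ^ n)%R.
Proof. by elim: n => [|n IH] //; rewrite expnS -multE mult_INR IH. Qed.

Lemma cube_bound (c n : nat) : (INR c * rho ^ n <= 1)%R -> c ^ 3 <= 4 ^ n.
Proof.
move=> H; apply/leP; apply: INR_le; rewrite !INR_expn.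
have cr0 : (0 <= INR c * rho ^ n)%R.
  by apply: Rmult_le_pos; [exact: pos_INR | exact: rho_pow_ge0].
have cube : ((INR c * rho ^ n) ^ 3 <= 1)%R by rewrite -(pow1 3); apply: pow_incr.
have quarter : ((rho ^ n) ^ 3 * INR 4 ^ n = 1)%R.
  rewrite -pow_mult Nat.mul_comm pow_mult rho_cube -Rpow_mult_distr.
  by replace (/ 4 * INR 4)%R with 1%R by (simpl; field); rewrite pow1.
have pos4 : (0 <= INR 4 ^ n)%R by apply: pow_le; exact: pos_INR.
rewrite Rpow_mult_distr in cube.
have := Rmult_le_compat_r _ _ _ pos4 cube; rewrite Rmult_assoc quarter; lra.
Qed.

Section Branching.
Variables (T : finType) (e : rel T).

Definition bounded (S : {set T}) : Prop := (INR (nim e S) * rho ^ #|S| <= 1)%R.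

Definition valid_branch (S : {set T}) (p : {set T} * nat) : bool :=
  [&& p.1 \subset S, 0 < p.2 & #|p.1| + p.2 <= #|S|].

Lemma branch_removing (S Y : {set T}) (s : seq T) :
  uniq s -> all (mem S) s -> all (mem Y) s -> 0 < size s ->
  valid_branch S (S :\: Y, size s).
Proof.
move=> us /allP sS /allP sY s0; rewrite /valid_branch subsetDl s0 /=.
have sSY : [set x in s] \subset S :&: Y.
  by apply/subsetP => x; rewrite !inE => xs; apply/andP; split; [exact: sS | exact: sY].
have -> : size s = #|[set x in s]| by rewrite cardsE; apply/esym/card_uniqP.
rewrite -(cardsID Y S) addnC leq_add2r.
exact: subset_leq_card.
Qed.

Variable S : {set T}.
Hypothesis IH : forall X : {set T}, X \proper S -> bounded X.

Lemma bounded_branch (s : seq ({set T} * nat)) :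
  nim e S <= \sum_(p <- s) nim e p.1 -> all (valid_branch S) s ->
  (\big[Rplus/0]_(p <- s) rho ^ p.2 <= 1)%R -> bounded S.
Proof.
move=> cover /allP valid budget.
have branch_weight p : p \in s -> (INR (nim e p.1) * rho ^ #|S| <= rho ^ p.2)%R.
  move=> /valid /and3P[sub k0 small].
  have prop : p.1 \proper S by rewrite properEcard sub /=; move: small k0; lia.
  have boundedX := IH prop; rewrite /bounded in boundedX.
  apply: Rle_trans (_ : INR (nim e p.1) * rho ^ (#|p.1| + p.2) <= _)%R.
    by apply: Rmult_le_compat_l; [exact: pos_INR | exact: rho_pow_anti].
  rewrite pow_add -Rmult_assoc; have := rho_pow_ge0 p.2; nra.
apply: Rle_trans budget; rewrite /bounded.
have := Rmult_le_compat_r _ _ _ (rho_pow_ge0 #|S|) (le_INR _ _ (leP cover)).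
move/Rle_trans; apply; elim: s branch_weight {cover valid} => [|p s IHs] weight.
  by rewrite !big_nil /=; lra.
rewrite !big_cons plus_INR Rmult_plus_distr_r; apply: Rplus_le_compat.
  by apply: weight; rewrite mem_head.
by apply: IHs => q qs; apply: weight; rewrite inE qs orbT.
Qed.

Hypothesis esym : symmetric e.
Hypothesis eirr : irreflexive e.

Lemma bounded_isolated v : v \in S -> nbhd e S v = set0 -> bounded S.
Proof.
move=> vS Nv; apply: (bounded_branch (s := [:: (S :\ v, 1)])).
- by rewrite big_cons big_nil addn0 /=; have := nim_isolated esym vS Nv.
- rewrite /= andbT.
  by apply: (branch_removing (s := [:: v])) => //=; rewrite ?inE ?vS ?eqxx.
- by rewrite big_cons big_nil /=; have := rho_le1; lra.
Qed.

Lemma bounded_pendant v u w :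
  v \in S -> nbhd e S v = [set u] -> w \in nbhd e S u -> w != v -> bounded S.
Proof.
move=> vS Nv; rewrite inE => /andP[wS euw] wv.
have /[!inE] /andP[uS evu] : u \in nbhd e S v by rewrite Nv set11.
have uv : u != v by rewrite eq_sym (adj_neq eirr).
have uw : u != w := adj_neq eirr euw.
apply: (bounded_branch
  (s := [:: (S :\ v, 1); (S :\: (closed_nbhd e u :|: closed_nbhd e v), 3)])).
- by have := nim_branch esym vS; rewrite Nv big_set1 !big_cons big_nil addn0.
- rewrite /= andbT; apply/andP; split.
    by apply: (branch_removing (s := [:: v])) => //=; rewrite ?inE ?vS ?eqxx.
  apply: (branch_removing (s := [:: u; v; w])) => //=;
    rewrite ?inE ?negb_or ?eqxx ?orbT ?andbT //=.
  + by rewrite uv uw eq_sym wv.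
  + by rewrite uS vS wS.
  + by rewrite euw orbT.
- by have := rho_budgets; rewrite !big_cons big_nil /=; lra.
Qed.

Lemma bounded_isolated_edge v u :
  v \in S -> nbhd e S v = [set u] -> nbhd e S u \subset [set v] -> bounded S.
Proof.
move=> vS Nv Nu.
have /[!inE] /andP[uS evu] : u \in nbhd e S v by rewrite Nv set11.
have uv : u != v by rewrite eq_sym (adj_neq eirr).
have uS' : u \in S :\ v by rewrite !inE uv uS.
have Nu' : nbhd e (S :\ v) u = set0 by rewrite nbhd_setD; apply/eqP; rewrite setD_eq0.
apply: (bounded_branch (s := [:: (S :\: [set v; u], 2);
                                 (S :\: (closed_nbhd e u :|: closed_nbhd e v), 2)])).
- have := nim_branch esym vS; rewrite Nv big_set1 !big_cons big_nil addn0 /=.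
  by have := nim_isolated esym uS' Nu'; rewrite setDDl; lia.
- rewrite /= andbT; apply/andP; split.
  + apply: (branch_removing (s := [:: v; u])) => //=;
      rewrite ?inE ?negb_or ?eqxx ?orbT ?andbT //=.
    * by rewrite eq_sym uv.
    * by rewrite vS uS.
  + apply: (branch_removing (s := [:: u; v])) => //=;
      rewrite ?inE ?negb_or ?eqxx ?orbT ?andbT //=.
    by rewrite uS vS.
- by have := rho_budgets; rewrite !big_cons big_nil /=; lra.
Qed.

Lemma bounded_two_private v u w x y :
  v \in S -> nbhd e S v = [set u; w] -> u != w ->
  x \in nbhd e S u -> x \notin [set v; w] ->
  y \in nbhd e S w -> y \notin [set v; u] -> bounded S.
Proof.
move=> vS Nv uw; rewrite !inE => /andP[xS eux] /norP[xv xw] /andP[yS ewy] /norP[yv yu].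
have /[!inE] /andP[uS evu] : u \in nbhd e S v by rewrite Nv !inE eqxx.
have /[!inE] /andP[wS evw] : w \in nbhd e S v by rewrite Nv !inE eqxx orbT.
have vu : v != u := adj_neq eirr evu.
have vw : v != w := adj_neq eirr evw.
have ux : u != x := adj_neq eirr eux.
have wy : w != y := adj_neq eirr ewy.
apply: (bounded_branch (s := [:: (S :\ v, 1);
                                 (S :\: (closed_nbhd e u :|: closed_nbhd e v), 4);
                                 (S :\: (closed_nbhd e w :|: closed_nbhd e v), 4)])).
- have := nim_branch esym vS; rewrite Nv big_setU1 ?inE //= big_set1.
  by rewrite !big_cons big_nil addn0 addnA.
- rewrite /= andbT; apply/and3P; split.
  + by apply: (branch_removing (s := [:: v])) => //=; rewrite ?inE ?vS ?eqxx.
  + apply: (branch_removing (s := [:: u; v; w; x])) => //=;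
      rewrite ?inE ?negb_or ?eqxx ?orbT ?andbT //=.
    * by rewrite (eq_sym u v) vu uw ux vw (eq_sym v x) xv (eq_sym w x) xw.
    * by rewrite uS vS wS xS.
    * by rewrite evw eux !orbT.
  + apply: (branch_removing (s := [:: w; v; u; y])) => //=;
      rewrite ?inE ?negb_or ?eqxx ?orbT ?andbT //=.
    * by rewrite (eq_sym w v) vw (eq_sym w u) uw wy vu (eq_sym v y) yv (eq_sym u y) yu.
    * by rewrite wS vS uS yS.
    * by rewrite evu ewy !orbT.
- by have := rho_budgets; rewrite !big_cons big_nil /=; lra.
Qed.

(* A triangle vuw in which v and u have degree two: branching vector
   (2, 3, 4, 4) if w has a further neighbour y, and (3, 3, 3, 3) if the
   triangle is a whole component (the extremal case K_3). *)
Lemma bounded_triangle v u w :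
  v \in S -> nbhd e S v = [set u; w] -> nbhd e S u = [set v; w] -> bounded S.
Proof.
move=> vS Nv Nu.
have /[!inE] /andP[uS evu] : u \in nbhd e S v by rewrite Nv !inE eqxx.
have /[!inE] /andP[wS evw] : w \in nbhd e S v by rewrite Nv !inE eqxx orbT.
have /[!inE] /andP[_ euw] : w \in nbhd e S u by rewrite Nu !inE eqxx orbT.
have vu : v != u := adj_neq eirr evu.
have vw : v != w := adj_neq eirr evw.
have uw : u != w := adj_neq eirr euw.
have ewu : e w u by rewrite esym.
have ewv : e w v by rewrite esym.
have cover := nim_triangle esym eirr vS Nv Nu.
have branch_uv : valid_branch S (S :\: (closed_nbhd e u :|: closed_nbhd e v), 3).
  apply: (branch_removing (s := [:: u; v; w])) => //=;
    rewrite ?inE ?negb_or ?eqxx ?orbT ?andbT //=.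
  + by rewrite (eq_sym u v) vu uw vw.
  + by rewrite uS vS wS.
  + by rewrite euw orbT.
case: (boolP (nbhd e S w \subset [set v; u])) => [Nw|].
- have wS' : w \in S :\: [set v; u] by rewrite !inE negb_or wS eq_sym vw eq_sym uw.
  have Nw' : nbhd e (S :\: [set v; u]) w = set0.
    by rewrite nbhd_setD; apply/eqP; rewrite setD_eq0.
  have := nim_isolated esym wS' Nw'; rewrite setDDl => isolated_w.
  have branch_w : valid_branch S (S :\: closed_nbhd e w, 3).
    apply: (branch_removing (s := [:: w; u; v])) => //=;
      rewrite ?inE ?negb_or ?eqxx ?orbT ?andbT //=.
    + by rewrite (eq_sym w u) uw (eq_sym w v) vw (eq_sym u v) vu.
    + by rewrite wS uS vS.
    + by rewrite ewu ewv !orbT.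
  apply: (bounded_branch (s := [:: (S :\: [set v; u; w], 3);
                                   (S :\: (closed_nbhd e u :|: closed_nbhd e v), 3);
                                   (S :\: closed_nbhd e w, 3);
                                   (S :\: closed_nbhd e w, 3)])).
  + rewrite !big_cons big_nil /= !addnA addn0.
    by apply: leq_trans cover _; rewrite !leq_add2r.
  + rewrite /= branch_uv branch_w !andbT.
    apply: (branch_removing (s := [:: v; u; w])) => //=;
      rewrite ?inE ?negb_or ?eqxx ?orbT ?andbT //=.
    * by rewrite vu vw uw.
    * by rewrite vS uS wS.
  + by have := rho_budgets; rewrite !big_cons big_nil /=; lra.
- case/subsetPn => y; rewrite !inE => /andP[yS ewy] /norP[yv yu].
  have wy : w != y := adj_neq eirr ewy.
  have branch_w : valid_branch S (S :\: closed_nbhd e w, 4).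
    apply: (branch_removing (s := [:: w; u; v; y])) => //=;
      rewrite ?inE ?negb_or ?eqxx ?orbT ?andbT //=.
    + by rewrite (eq_sym w u) uw (eq_sym w v) vw wy (eq_sym u v) vu
                 (eq_sym u y) yu (eq_sym v y) yv.
    + by rewrite wS uS vS yS.
    + by rewrite ewu ewv ewy !orbT.
  apply: (bounded_branch (s := [:: (S :\: [set v; u], 2);
                                   (S :\: (closed_nbhd e u :|: closed_nbhd e v), 3);
                                   (S :\: closed_nbhd e w, 4);
                                   (S :\: closed_nbhd e w, 4)])).
  + by rewrite !big_cons big_nil /= !addnA addn0.
  + rewrite /= branch_uv branch_w !andbT.
    apply: (branch_removing (s := [:: v; u])) => //=;
      rewrite ?inE ?negb_or ?eqxx ?orbT ?andbT //=.
    by rewrite vS uS.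
  + by have := rho_budgets; rewrite !big_cons big_nil /=; lra.
Qed.

(* v has two neighbours u, w and u has no neighbour outside {v, w}: either
   uvw is a triangle, or u is a pendant vertex attached to v. *)
Lemma bounded_deg2 v u w : v \in S -> nbhd e S v = [set u; w] -> u != w ->
  nbhd e S u \subset [set v; w] -> bounded S.
Proof.
move=> vS Nv uw Nu.
have /[!inE] /andP[uS evu] : u \in nbhd e S v by rewrite Nv !inE eqxx.
have wN : w \in nbhd e S v by rewrite Nv !inE eqxx orbT.
have vN : v \in nbhd e S u by rewrite inE vS esym.
case euw: (e u w).
- apply: bounded_triangle vS Nv _; apply/eqP; rewrite eqEsubset Nu subUset !sub1set vN.
  by rewrite inE euw andbT; move: wN; rewrite inE => /andP[].
- apply: (bounded_pendant (v := u) (u := v) (w := w)) => //; last by rewrite eq_sym.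
  apply/eqP; rewrite eqEsubset sub1set vN andbT; apply/subsetP => y yN.
  move: (subsetP Nu y yN); rewrite !inE => /orP[//|/eqP yw].
  by move: yN; rewrite yw inE euw andbF.
Qed.

Lemma bounded_low_degree v : v \in S -> #|nbhd e S v| <= 2 -> bounded S.
Proof.
move=> vS.
case: (posnP #|nbhd e S v|) => [/cards0_eq N0 _ | pos le2].
  exact: bounded_isolated vS N0.
case: (boolP (#|nbhd e S v| == 1)) => [/cards1P [u Nv] | d2].
  case: (boolP (nbhd e S u \subset [set v])) => [Nu | /subsetPn [w wN wv]].
    exact: bounded_isolated_edge vS Nv Nu.
  by apply: bounded_pendant vS Nv wN _; rewrite inE in wv.
have /cards2P [u [w [uw Nv]]] : #|nbhd e S v| == 2 by move: pos le2 d2; lia.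
case: (boolP (nbhd e S u \subset [set v; w])) => [Nu | /subsetPn [x xN xvw]].
  exact: bounded_deg2 vS Nv uw Nu.
case: (boolP (nbhd e S w \subset [set v; u])) => [Nw | /subsetPn [y yN yvu]].
  by apply: bounded_deg2 vS _ _ Nw; rewrite 1?eq_sym // Nv setUC.
exact: bounded_two_private vS Nv uw xN xvw yN yvu.
Qed.

End Branching.

Definition degenerate (T : finType) (e : rel T) (k : nat) : Prop :=
  forall S : {set T}, S != set0 -> exists2 v, v \in S & #|nbhd e S v| <= k.

(* A graph of pathwidth at most k is k-degenerate: in a nonempty S take the
   vertex v whose last bag X comes first; every neighbour of v in S meets a bag
   up to X and one from X on, hence lies in X, which has at most k + 1 vertices. *)
Lemma pathwidth_degenerate (T : finType) (e : rel T) k :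
  irreflexive e -> pathwidth_le e k -> degenerate e k.
Proof.
move=> eirr [B [[cov [edg intv]] small]] S neS.
pose bags x := [pred i : 'I_(size B) | x \in nth set0 B i].
pose last_bag x := \max_(i in bags x) (i : nat).
have last_bagP x : x \in nth set0 B (last_bag x) /\ last_bag x < size B.
  have [X XB xX] := cov x.
  have nonempty : 0 < #|bags x|.
    apply/card_gt0P; exists (Ordinal (etrans (index_mem X B) XB)).
    by rewrite inE /= nth_index.
  rewrite /last_bag.
  have [j jx ->] := eq_bigmax_cond (fun i : 'I_(size B) => (i : nat)) nonempty.
  by split; [exact: jx | exact: ltn_ord].
have last_bag_max x j : j < size B -> x \in nth set0 B j -> j <= last_bag x.
  move=> jB xj.
  exact: (@leq_bigmax_cond _ (bags x) (fun i : 'I_(size B) => (i : nat)) (Ordinal jB)).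
have [x0 x0S] := set0Pn _ neS.
pose v := [arg min_(x < x0 in S) last_bag x].
have [vS vmin] : v \in S /\ forall x, x \in S -> last_bag v <= last_bag x.
  by rewrite /v; case: arg_minnP.
exists v => //.
have [vX XB] := last_bagP v; set X := nth set0 B (last_bag v).
have sub : nbhd e S v \subset X :\ v.
  apply/subsetP => u; rewrite !inE => /andP[uS evu].
  have -> : u != v by apply: contraTneq evu => ->; rewrite eirr.
  have [Y YB /andP[vY uY]] := edg _ _ evu.
  have [uu uB] := last_bagP u.
  apply: (intv u (index Y B) (last_bag v) (last_bag u)) => //; last by rewrite nth_index.
  - by apply: last_bag_max; rewrite ?index_mem ?nth_index.
  - exact: vmin.
apply: leq_trans (subset_leq_card sub) _.
have := all_nthP set0 small (last_bag v) XB; rewrite -/X (cardsD1 v X) vX; lia.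
Qed.

Lemma degenerate2_bounded (T : finType) (e : rel T) :
  symmetric e -> irreflexive e -> degenerate e 2 -> forall S : {set T}, bounded e S.
Proof.
move=> esym eirr dg S; have [n] := ubnP #|S|; elim: n S => // n IHn S ltSn.
have [-> | neS] := eqVneq S set0.
  rewrite /bounded cards0 /= Rmult_1_r.
  by have /leP/le_INR := nim_set0 e; rewrite /=; lra.
have [v vS lowv] := dg S neS.
apply: (bounded_low_degree _ esym eirr vS lowv) => X /proper_card ltX.
by apply: IHn; lia.
Qed.

Theorem pathwidth2_nim_bound (T : finType) (e : rel T) :
  simple_graph e -> pathwidth_le e 2 -> num_induced_matchings e ^ 3 <= 4 ^ #|T|.
Proof.
move=> [esym eirr] pw.
have -> : num_induced_matchings e = nim e setT.
  by apply: eq_card => D; rewrite !inE subsetT.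
rewrite -cardsT; apply: cube_bound.
exact: degenerate2_bounded esym eirr (pathwidth_degenerate eirr pw) setT.
Qed.

Lemma K3_simple : simple_graph K3.
Proof. by split => [i j | i]; rewrite /K3 ?eqxx // eq_sym. Qed.

Lemma K3_pathwidth : pathwidth_le K3 2.
Proof.
exists [:: setT]; split; last by rewrite /= cardsT card_ord.
split; [move=> x; exists setT; rewrite ?inE // | split].
- by move=> x y _; exists setT; rewrite ?inE.
- by move=> x [|i] [|j] [|k].
Qed.

Lemma K3_pair_im (D : {set 'I_3}) : #|D| == 2 -> induced_matching K3 D.
Proof.
move=> /eqP D2; apply/forallP => x; apply/implyP => xD.
have -> : [set y in D | K3 x y] = D :\ x.
  by apply/setP => y; rewrite !inE /K3 eq_sym andbC.
by move: D2; rewrite (cardsD1 x D) xD add1n => /eqP; rewrite eqSS eq_sym.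
Qed.

(* The triangle has exactly four induced matchings: the empty set and its
   three edges (at most four by the bound itself). *)
Lemma K3_nim : num_induced_matchings K3 = 4.
Proof.
apply/eqP; rewrite eqn_leq; apply/andP; split.
  have := pathwidth2_nim_bound K3_simple K3_pathwidth.
  by rewrite card_ord (leq_exp2r _ 4 (isT : 0 < 3)).
have sub : set0 |: [set D : {set 'I_3} | #|D| == 2] \subset
           [set D | induced_matching K3 D].
  apply/subsetP => D; rewrite !inE => /orP[/eqP -> | /K3_pair_im //].
  by apply/forallP => x; rewrite inE.
by have := subset_leq_card sub; rewrite cardsU1 card_draws card_ord inE cards0.
Qed.

Theorem mainTheorem14 :
  (forall (T : finType) (e : rel T), simple_graph e -> pathwidth_le e 2 ->
     num_induced_matchings e ^ 3 <= 4 ^ #|T|)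
  /\ (simple_graph K3 /\ pathwidth_le K3 2 /\
      num_induced_matchings K3 ^ 3 = 4 ^ #|'I_3|).
Proof.
split; first exact: pathwidth2_nim_bound.
by split; [exact: K3_simple | split; [exact: K3_pathwidth | rewrite K3_nim card_ord]].
Qed.
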